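(* Let $m\ge1$ be an integer, let $\tilde H\in\Omega_{4n}$ be invertible and Hermitian, and let $\tilde B\in\Omega_{4n}$ be $\tilde H$-selfadjoint with $\sigma(\tilde B)\cap\mathbb{R}=\emptyset$. Then there exists an $\tilde H$-selfadjoint $\tilde A\in\Omega_{4n}$ such that $\tilde A^m=\tilde B$.
   Context: $\Omega_{2k}=\{\begin{bmatrix}A_1&\bar A_2\\-A_2&\bar A_1\end{bmatrix}: A_1,A_2\in\mathbb{C}^{k\times k}\}\subset\mathbb{C}^{2k\times 2k}$. For an invertible Hermitian $H$, $A$ is $H$-selfadjoint if $HA=A^*H$. $\sigma(\cdot)$ denotes the spectrum. *)

From HB Require Import structures.
From mathcomp Require Import all_boot all_order all_algebra.
From mathcomp Require Import complex.
From mathcomp Require Import reals.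
Set Implicit Arguments. Unset Strict Implicit. Unset Printing Implicit Defensive.
Import Order.TTheory GRing.Theory Num.Theory.
Local Open Scope ring_scope.

Definition cconj (R : realType) (z : R[i]) : R[i] := Num.conj_op z.

Definition mxconj (R : realType) m n (A : 'M[R[i]]_(m, n)) : 'M[R[i]]_(m, n) :=
  map_mx (@cconj R) A.
Definition adjmx (R : realType) m n (A : 'M[R[i]]_(m, n)) : 'M[R[i]]_(n, m) :=
  (mxconj A)^T.

Definition Omega_mx (R : realType) (k : nat) (M : 'M[R[i]]_(k + k)) : Prop :=
  exists A1 A2 : 'M[R[i]]_k,
    M = block_mx A1 (mxconj A2) (- A2) (mxconj A1).

Definition is_hermitian_mx (R : realType) k (H : 'M[R[i]]_k) : Prop := adjmx H = H.

Definition H_selfadjoint_mx (R : realType) k (H A : 'M[R[i]]_k) : Prop :=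
  H *m A = adjmx A *m H.

Definition no_real_eigenvalue (R : realType) k (B : 'M[R[i]]_k) : Prop :=
  forall a : R[i], eigenvalue B a -> a \isn't Num.real.

(* Idea: the required root is a polynomial in B itself.  Call a complex
   polynomial "real" when its coefficients are real.  We construct a real
   polynomial q whose m-th power is congruent to 'X modulo the characteristic
   polynomial of B; then A := q(B) satisfies A^m = B (Cayley-Hamilton).
   Since q is real, q(B) inherits from B every relation of the form
   K B = B' K with B' the entrywise conjugate or the adjoint of B:
   - Omega_{2k} is the set of M with J M = conj(M) J, so q(B) \in Omega_{2k};
   - H B = B^* H gives H q(B) = q(B)^* H.
   The polynomial q is obtained by Hermite interpolation of an m-th root
   function at the eigenvalues, built by Newton (Hensel) lifting: start from
   a real interpolant of a conjugation-compatible branch of the m-th root on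
   the (conjugation-closed, non-real, hence non-zero) spectrum, then raise the
   multiplicity of the congruence one step at a time. *)

From HB Require Import structures.
From mathcomp Require Import all_boot all_order all_algebra.
From mathcomp Require Import complex.
From mathcomp Require Import reals.
From mathcomp Require Import ring.
Set Implicit Arguments. Unset Strict Implicit. Unset Printing Implicit Defensive.
Import Order.TTheory GRing.Theory Num.Theory.
Local Open Scope ring_scope.

Lemma exprD_linear_rem (T : comNzRingType) (a b : T) (m : nat) :
  exists c, (a + b) ^+ m.+1 = a ^+ m.+1 + m.+1%:R * a ^+ m * b + b ^+ 2 * c.
Proof.
elim: m => [|m [c IH]]; first by exists 0; rewrite !expr1 expr0 mulr0 addr0 mulr1 mul1r.
exists (a * c + m.+1%:R * a ^+ m + b * c).
rewrite exprS IH !exprS -[m.+2]addn1 -[m.+1]addn1 !natrD; ring.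
Qed.

Section RealPolynomials.
Variable C : numClosedFieldType.
Implicit Types (p q : {poly C}) (s : seq C).

Definition real_poly p : Prop := map_poly Num.conj p = p.

Lemma real_poly_horner_conj p x : real_poly p -> p.[x^*] = (p.[x])^*.
Proof. by move=> rp; rewrite -horner_map rp. Qed.

Lemma lagrange_interpolation s (g : C -> C) : uniq s ->
  exists p, forall x, x \in s -> p.[x] = g x.
Proof.
elim: s => [|y s IH] /=; first by exists 0.
case/andP=> ys us; have [p Hp] := IH us.
pose D := \prod_(z <- s) ('X - z%:P).
have Dy0 : D.[y] != 0.
  rewrite horner_prod prodf_seq_neq0; apply/allP => z zs /=.
  by rewrite hornerXsubC subr_eq0; apply: contraNneq ys => ->.
have Ds z : z \in s -> D.[z] = 0.
  by move=> zs; apply/eqP; rewrite -/(root D z) root_prod_XsubC.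
exists (p + ((g y - p.[y]) / D.[y]) *: D) => x; rewrite inE => /orP [/eqP->|xs].
  by rewrite hornerD hornerZ divfK // addrC subrK.
by rewrite hornerD hornerZ (Ds x xs) mulr0 addr0 Hp.
Qed.

(* If the nodes are closed under conjugation and the data commute with it,
   the interpolant can be taken real: average p with its conjugate. *)
Lemma real_interpolation s (g : C -> C) : uniq s ->
  (forall x, x \in s -> x^* \in s) ->
  (forall x, x \in s -> g x^* = (g x)^*) ->
  exists p, real_poly p /\ forall x, x \in s -> p.[x] = g x.
Proof.
move=> us sc gc; have [p Hp] := @lagrange_interpolation s g us.
exists (2^-1 *: (p + map_poly Num.conj p)); split.
  rewrite /real_poly linearZ /= rmorphD /= -map_poly_comp.
  have -> : map_poly (Num.conj \o Num.conj) p = p.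
    by apply: map_poly_id => z _ /=; rewrite conjCK.
  by rewrite fmorphV rmorph_nat addrC.
move=> x xs; rewrite hornerZ hornerD -{2}(conjCK x) horner_map /=.
rewrite (Hp _ (sc _ xs)) gc // conjCK Hp //.
have n20 : (2 : C) != 0 by rewrite pnatr_eq0.
by field.
Qed.

Lemma prod_XsubC_dvdp s p : uniq s ->
  (forall x, x \in s -> root p x) -> \prod_(z <- s) ('X - z%:P) %| p.
Proof.
move=> us ps.
have [||q ->] := @uniq_roots_prod_XsubC _ p s; last by rewrite dvdp_mull.
  by apply/allP => x /ps.
by rewrite uniq_rootsE.
Qed.

Lemma prod_XsubC_dvdp_exp s S :
  (forall x, x \in s -> root S x) -> \prod_(z <- s) ('X - z%:P) %| S ^+ size s.
Proof.
elim: s => [|y s IH] Ss /=; first by rewrite big_nil expr0.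
rewrite big_cons exprS dvdp_mul ?dvdp_XsubCl ?Ss ?mem_head //.
by apply: IH => x xs; rewrite Ss // inE xs orbT.
Qed.

(* A branch of the m-th root chosen so that it commutes with conjugation
   off the real axis: the principal root in the upper half-plane, and its
   mirror image in the lower one. *)
Definition root_branch (m : nat) (x : C) : C :=
  if 0 < 'Im x then m.-root x else (m.-root x^*)^*.

Lemma root_branchK m x : (0 < m)%N -> root_branch m x ^+ m = x.
Proof.
move=> m_gt0; rewrite /root_branch; case: ifP => _; first by rewrite rootCK.
by rewrite -rmorphXn /= rootCK // conjCK.
Qed.

Lemma root_branch_conj m x :
  x \isn't Num.real -> root_branch m x^* = (root_branch m x)^*.
Proof.
move=> /Creal_ImP/eqP; rewrite /root_branch Im_conj oppr_gt0 conjCK.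
rewrite real_neqr_lt ?Creal_Im ?real0 // => /orP [Im_lt0|Im_gt0].
  by rewrite Im_lt0 (lt_gtF Im_lt0) conjCK.
by rewrite Im_gt0 (lt_gtF Im_gt0).
Qed.

(* Newton lifting: with S the product of the linear factors of a uniq,
   conjugation-closed list of non-real numbers, a real q with
   S^j | q^m - 'X is improved to q - (q^m - 'X) r, where r is a real
   interpolant of 1 / (m q^(m-1)) on the roots of S. *)
Section NewtonLifting.
Variables (m' : nat) (s : seq C).
Local Notation m := m'.+1.
Hypothesis s_uniq : uniq s.
Hypothesis s_conj : forall x, x \in s -> x^* \in s.
Hypothesis s_nonreal : forall x, x \in s -> x \isn't Num.real.
Local Notation S := (\prod_(z <- s) ('X - z%:P)).

Lemma root_S (x : C) : x \in s -> root S x.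
Proof. by rewrite root_prod_XsubC. Qed.

Lemma nonreal_neq0 (x : C) : x \isn't Num.real -> x != 0.
Proof. by apply: contraNneq => ->; rewrite real0. Qed.

(* First approximation: interpolate the root branch on the roots of S. *)
Lemma newton_base : exists q, real_poly q /\ S %| q ^+ m - 'X.
Proof.
have [q [rq Hq]] := @real_interpolation s (root_branch m) s_uniq s_conj
  (fun x xs => root_branch_conj m (s_nonreal xs)).
exists q; split => //; apply: prod_XsubC_dvdp => // x xs.
by rewrite /root !hornerE Hq // root_branchK // subrr.
Qed.

Lemma newton_step j q : real_poly q -> S ^+ j.+1 %| q ^+ m - 'X ->
  exists q', real_poly q' /\ S ^+ j.+2 %| q' ^+ m - 'X.
Proof.
move=> rq Hq; set e := q ^+ m - 'X.
have Se : S %| e by apply: dvdp_trans Hq; rewrite -{1}(expr1 S) dvdp_exp2l.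
have q_root x : x \in s -> q.[x] ^+ m = x.
  move=> xs; have := root_dvdp Se (root_S xs).
  by rewrite /root !hornerE subr_eq0 => /eqP.
have deriv_neq0 x : x \in s -> m%:R * q.[x] ^+ m' != 0.
  move=> xs; rewrite mulf_neq0 ?pnatr_eq0 // expf_neq0 //.
  apply: contraTneq (nonreal_neq0 (s_nonreal xs)) => q0.
  by rewrite negbK -(q_root _ xs) q0 expr0n.
pose g x := (m%:R * q.[x] ^+ m')^-1.
have g_conj x : x \in s -> g x^* = (g x)^*.
  by move=> xs; rewrite /g real_poly_horner_conj // fmorphV rmorphM rmorph_nat rmorphXn.
have [r [rr Hr]] := @real_interpolation s g s_uniq s_conj g_conj.
have [c Hc] := exprD_linear_rem q (- (e * r)) m'.
exists (q - e * r); split.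
  by rewrite /real_poly rmorphB rmorphM /= rr /e rmorphB rmorphXn /= map_polyX rq.
have -> : (q - e * r) ^+ m - 'X =
          e * (1 - m%:R * q ^+ m' * r) + e * e * (r ^+ 2 * c).
  rewrite Hc sqrrN /e; move: (q ^+ m) (q ^+ m') (m%:R : {poly C}) => A B N; ring.
apply: dvdp_add; last by apply: dvdp_mulr; rewrite exprSr dvdp_mul.
rewrite exprSr dvdp_mul //; apply: prod_XsubC_dvdp => // x xs.
by rewrite /root !hornerE Hr // /g hornerMn hornerC mulfV ?subrr ?deriv_neq0.
Qed.

Lemma newton_lift j : exists q, real_poly q /\ S ^+ j.+1 %| q ^+ m - 'X.
Proof.
elim: j => [|j [q [rq Hq]]]; last exact: newton_step rq Hq.
by have [q [rq Hq]] := newton_base; exists q; rewrite expr1.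
Qed.

End NewtonLifting.

(* For any conjugation-closed list rs of non-real numbers (possibly with
   repetitions) and m > 0 there is a real polynomial q such that
   \prod_(z <- rs) ('X - z) divides q^m - 'X: lift to the multiplicity
   size rs on the list of distinct entries. *)
Lemma real_poly_mth_root (rs : seq C) (m : nat) : (0 < m)%N ->
  (forall x, x \in rs -> x^* \in rs) ->
  (forall x, x \in rs -> x \isn't Num.real) ->
  exists q, real_poly q /\ \prod_(z <- rs) ('X - z%:P) %| q ^+ m - 'X.
Proof.
case: m => // m' _ rs_conj rs_nonreal.
pose s := undup rs.
have s_conj x : x \in s -> x^* \in s by rewrite !mem_undup; apply: rs_conj.
have s_nonreal x : x \in s -> x \isn't Num.real.
  by rewrite mem_undup; apply: rs_nonreal.
have [q [rq Hq]] := newton_lift m' (undup_uniq rs) s_conj s_nonreal (size rs).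
exists q; split => //; apply: dvdp_trans Hq.
apply: dvdp_trans (dvdp_exp2l _ (leqnSn _)).
by apply: prod_XsubC_dvdp_exp => x xs; apply: root_S; rewrite mem_undup.
Qed.

End RealPolynomials.

Lemma horner_mx_intertwine (T : comNzRingType) N (X Y K : 'M[T]_N.+1)
    (q : {poly T}) :
  K *m X = Y *m K -> K *m horner_mx X q = horner_mx Y q *m K.
Proof.
move=> KX; elim/poly_ind: q => [|p c IH]; first by rewrite !rmorph0 mulmx0 mul0mx.
rewrite !rmorphD !rmorphM /= !horner_mx_X !horner_mx_C -!mulmxE.
by rewrite mulmxDr mulmxDl mulmxA IH -(mulmxA _ K X) KX scalar_mxC mulmxA.
Qed.

Lemma horner_mx_tr (T : comNzRingType) N (X : 'M[T]_N.+1) (q : {poly T}) :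
  (horner_mx X q)^T = horner_mx X^T q.
Proof.
elim/poly_ind: q => [|p c IH]; first by rewrite !rmorph0 trmx0.
rewrite !rmorphD !rmorphM /= !horner_mx_X !horner_mx_C -!mulmxE.
rewrite linearD /= trmx_mul IH tr_scalar_mx; congr (_ + _).
exact: (@comm_mx_horner _ _ X^T X^T p (erefl _)).
Qed.

Section QuaternionicStructure.
Variable R : realType.
Local Notation C := R[i].

Lemma mxconjE m n (A : 'M[C]_(m, n)) : mxconj A = map_mx Num.conj A.
Proof. by []. Qed.

Lemma mxconjN m n (A : 'M[C]_(m, n)) : mxconj (- A) = - mxconj A.
Proof. by rewrite !mxconjE map_mxN. Qed.

Lemma mxconj_block m1 m2 n1 n2 (A : 'M[C]_(m1, n1)) (B : 'M[C]_(m1, n2))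
    (E : 'M[C]_(m2, n1)) (D : 'M[C]_(m2, n2)) :
  mxconj (block_mx A B E D) =
  block_mx (mxconj A) (mxconj B) (mxconj E) (mxconj D).
Proof. by rewrite !mxconjE map_block_mx. Qed.

Lemma mxconjK m n (A : 'M[C]_(m, n)) : mxconj (mxconj A) = A.
Proof. by apply/matrixP => i j; rewrite !mxE /cconj conjCK. Qed.

Lemma mxconjM m n p (A : 'M[C]_(m, n)) (B : 'M[C]_(n, p)) :
  mxconj (A *m B) = mxconj A *m mxconj B.
Proof. by rewrite !mxconjE map_mxM. Qed.

Lemma mxconjZ m n (x : C) (A : 'M[C]_(m, n)) : mxconj (x *: A) = x^* *: mxconj A.
Proof. by rewrite !mxconjE map_mxZ. Qed.

Lemma mxconj_eq0 m n (A : 'M[C]_(m, n)) : (mxconj A == 0) = (A == 0).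
Proof. by rewrite mxconjE map_mx_eq0. Qed.

Lemma mxconj_horner N (X : 'M[C]_N.+1) (q : {poly C}) :
  mxconj (horner_mx X q) = horner_mx (mxconj X) (map_poly Num.conj q).
Proof. by rewrite mxconjE map_horner_mx. Qed.

Lemma adjmx_horner N (X : 'M[C]_N.+1) (q : {poly C}) :
  adjmx (horner_mx X q) = horner_mx (adjmx X) (map_poly Num.conj q).
Proof. by rewrite /adjmx mxconj_horner horner_mx_tr. Qed.

(* The spectrum of a matrix similar to its conjugate is closed under
   conjugation: if B v = a v then B (conj v K) = conj a (conj v K). *)
Lemma eigenvalue_conj k (K B : 'M[C]_k) (a : C) :
  K \in unitmx -> K *m B = mxconj B *m K ->
  eigenvalue B a -> eigenvalue B a^*.
Proof.
move=> Ku KB /eigenvalueP [v vB v0]; apply/eigenvalueP.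
exists (mxconj v *m K); first by rewrite -mulmxA KB mulmxA -mxconjM vB mxconjZ scalemxAl.
by rewrite mulmx_free_eq0 ?row_free_unit // mxconj_eq0.
Qed.

Definition Jmx k : 'M[C]_(k + k) := block_mx 0 1%:M (- 1%:M) 0.

(* J^2 = -I, so J is invertible. *)
Lemma Jmx_unit k : Jmx k \in unitmx.
Proof.
apply: (proj1 (@mulmx1_unit _ _ _ (- Jmx k) _)).
rewrite /Jmx mulmxN mulmx_block !mul0mx !mulmx0 !mul1mx !mulmx1 ?mulNmx.
by rewrite !addr0 !add0r [in RHS]scalar_mx_block opp_block_mx !oppr0 opprK.
Qed.

Lemma Omega_J k (M : 'M[C]_(k + k)) :
  Omega_mx M <-> Jmx k *m M = mxconj M *m Jmx k.
Proof.
split.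
  case=> [A1 [A2 ->]]; rewrite /Jmx mxconj_block mxconjN !mxconjK.
  rewrite !mulmx_block !mul0mx !mulmx0 !mul1mx !mulmx1 ?mulNmx ?mulmxN.
  by rewrite ?mul1mx ?mulmx1 !addr0 !add0r.
rewrite -[M]submxK /Jmx mxconj_block.
rewrite !mulmx_block !mul0mx !mulmx0 !mul1mx !mulmx1 ?mulNmx ?mulmxN ?mul1mx.
rewrite ?mulmx1 !addr0 !add0r => /eq_block_mx [_ e2 _ e4].
exists (ulsubmx M), (- dlsubmx M); congr block_mx; last by rewrite e2.
  by rewrite mxconjN -e4 opprK.
by rewrite opprK.
Qed.

Lemma Omega_horner k (B : 'M[C]_(k.+1 + k.+1)) (q : {poly C}) :
  Omega_mx B -> real_poly q -> Omega_mx (horner_mx B q : 'M_(k.+1 + k.+1)).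
Proof.
move=> /Omega_J JB rq; apply/Omega_J.
by rewrite mxconj_horner rq; apply: horner_mx_intertwine.
Qed.

Lemma H_selfadjoint_horner N (H B : 'M[C]_N.+1) (q : {poly C}) :
  H_selfadjoint_mx H B -> real_poly q -> H_selfadjoint_mx H (horner_mx B q).
Proof.
by move=> HB rq; rewrite /H_selfadjoint_mx adjmx_horner rq; apply: horner_mx_intertwine.
Qed.

End QuaternionicStructure.

Lemma horner_mx_mth_root (F : fieldType) N (B : 'M[F]_N.+1) (q : {poly F}) m :
  char_poly B %| q ^+ m - 'X -> horner_mx B q ^+ m = B.
Proof.
case/dvdpP=> c qmE; have qmE' : q ^+ m = 'X + c * char_poly B.
  by rewrite -qmE addrC subrK.
by rewrite -rmorphXn /= qmE' rmorphD rmorphM /= horner_mx_X Cayley_Hamilton mulr0 addr0.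
Qed.

Lemma char_poly_split (F : closedFieldType) N (B : 'M[F]_N) :
  exists2 rs : seq F, char_poly B = \prod_(z <- rs) ('X - z%:P)
    & forall x, (x \in rs) = eigenvalue B x.
Proof.
have [rs Ers] := closed_field_poly_normal (char_poly B).
rewrite (monicP (char_poly_monic B)) scale1r in Ers.
by exists rs => // x; rewrite eigenvalue_root_char Ers root_prod_XsubC.
Qed.

Theorem mainTheorem7 (R : realType) (n m : nat)
  (Ht Bt : 'M[R[i]]_(n.*2 + n.*2)) :
  (1 <= m)%N ->
  Omega_mx Ht -> Ht \in unitmx -> is_hermitian_mx Ht ->
  Omega_mx Bt -> H_selfadjoint_mx Ht Bt -> no_real_eigenvalue Bt ->
  exists At : 'M[R[i]]_(n.*2 + n.*2),
    [/\ Omega_mx At, H_selfadjoint_mx Ht At & At ^+ m = Bt].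
Proof.
move=> m_gt0 _ _ _ OmegaB HB B_nonreal.
case: n Ht Bt OmegaB HB B_nonreal => [|n] H B OmegaB HB B_nonreal.
  by exists B; split => //; apply/matrixP => -[].
have [rs charE rsE] := char_poly_split B.
have B_conj x : eigenvalue B x -> eigenvalue B x^*.
  by apply: eigenvalue_conj (Jmx_unit _ _) _; apply/Omega_J.
have [q [rq q_root]] : exists q, real_poly q /\ char_poly B %| q ^+ m - 'X.
  rewrite charE; apply: real_poly_mth_root => // x; rewrite !rsE.
    exact: B_conj.
  exact: B_nonreal.
exists (horner_mx B q); split.
- exact: Omega_horner.
- exact: H_selfadjoint_horner.
- exact: horner_mx_mth_root.
Qed.
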